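(* Let $d\geq1$ be an integer and, for real $n>d/2$ and $u\in[0,+\infty)$, let $$\mathscr B_{nd}(u):=(1+4u)^n\int_0^{1/4}ds\,\frac{s^{n-1}}{\sqrt{1-s}\,(1+us)^{2n-d/2}},\qquad B_{nd}:=\sup_{u\in[0,+\infty)}\mathscr B_{nd}(u).$$ Then, for fixed $d$ and $n\to+\infty$, $B_{nd}=O\big(n^{-1/2}(9/8)^n\big)$. *)

From Stdlib Require Import Reals.
From Coquelicot Require Import Coquelicot.
Open Scope R_scope.

Definition integrand (n : R) (d : nat) (u s : R) : R :=
  Rpower s (n - 1) / (sqrt (1 - s) * Rpower (1 + u * s) (2 * n - INR d / 2)).

Definition Bscr (n : R) (d : nat) (u : R) : R :=
  Rpower (1 + 4 * u) n * RInt (integrand n d u) 0 (1 / 4).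

Definition Bnd (n : R) (d : nat) : Rbar :=
  Lub_Rbar (fun y => exists u, 0 <= u /\ y = Bscr n d u).

From Stdlib Require Import Reals Lra.
From Coquelicot Require Import Coquelicot.
Open Scope R_scope.

(* Write P = 1 + 4u and A = 1 + us.  Then (1+4u)^n times the integrand factors as
   (sP/A^2)^(n-1-d/2) (sP/A)^(d/2) (P/A^2) / sqrt(1-s).  On 0 < s <= 1/4 the first
   base is at most 16/15 (its maximum, at s = 1/4 and us = 7/8), the second at most 4,
   and P/A^2 integrates to at most 4 over [0, 1/4]; hence B_nd = O((16/15)^n) uniformly
   in u.  As 16/15 < 9/8, the geometric gap absorbs the factor sqrt n. *)

Lemma Rpower_pos x y : 0 < Rpower x y.
Proof. exact (exp_pos _). Qed.

Lemma exp_le_compat x y : x <= y -> exp x <= exp y.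
Proof. intros [Hlt | ->]; [now left; apply exp_increasing | lra]. Qed.

Lemma ln_le_sub1 x : 0 < x -> ln x <= x - 1.
Proof. intros Hx. pose proof (exp_ineq1_le (ln x)) as H. rewrite exp_ln in H; lra. Qed.

Lemma Rpower_le_sqrt_decay q r : 0 < q < r ->
  exists C, forall n, 0 < n -> Rpower q n <= C * Rpower n (- (1 / 2)) * Rpower r n.
Proof.
  intros [Hq Hqr].
  set (c := ln r - ln q).
  assert (Hc : 0 < c) by (pose proof (ln_increasing q r Hq Hqr); unfold c; lra).
  (* The constant is read off from ln (2 c n) <= 2 c n - 1. *)
  exists (exp (- (1 + ln (2 * c)) / 2)). intros n Hn.
  pose proof (ln_le_sub1 (2 * c * n) ltac:(nra)) as Hln.
  rewrite ln_mult in Hln by nra.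
  unfold Rpower. rewrite <- !exp_plus. apply exp_le_compat.
  unfold c in *. lra.
Qed.

Lemma ball_R x e y : @ball R_UniformSpace x e y <-> Rabs (y - x) < e.
Proof. reflexivity. Qed.

(* [Rpower 0 a = 1] since [ln 0 = 0]; cutting the power off at 0 restores continuity. *)
Definition pos_power (a s : R) : R := if Rlt_dec 0 s then Rpower s a else 0.

Lemma pos_power_continuous a c : 0 < a -> 0 <= c -> continuous (pos_power a) c.
Proof.
  intros Ha [Hc | <-].
  - apply (filterlim_ext_loc (fun s => exp (a * ln s))).
    + exists (mkposreal c Hc). intros y Hy.
      rewrite ball_R in Hy. apply Rabs_def2 in Hy. simpl in Hy. unfold pos_power.
      destruct (Rlt_dec 0 y); [reflexivity | lra].
    + replace (pos_power a c) with (exp (a * ln c))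
        by (unfold pos_power; destruct (Rlt_dec 0 c); [reflexivity | lra]).
      apply (continuous_exp_comp (fun s => a * ln s)).
      apply (@ex_derive_continuous R_AbsRing R_NormedModule). auto_derive. lra.
  - apply filterlim_locally. intros eps.
    (* Below [eps ^ (1/a)] the power stays below [eps]. *)
    exists (mkposreal _ (Rpower_pos eps (/ a))). intros y Hy.
    rewrite ball_R in Hy. apply Rabs_def2 in Hy. simpl in Hy.
    rewrite ball_R. unfold pos_power.
    destruct (Rlt_dec 0 0) as [Habsurd | _]; [lra |].
    destruct (Rlt_dec 0 y) as [Hy0 | _].
    + replace (pos eps) with (Rpower (Rpower eps (/ a)) a)
        by (rewrite Rpower_mult, Rinv_l, Rpower_1 by (apply cond_pos || lra); reflexivity).
      pose proof (Rlt_Rpower_l y (Rpower eps (/ a)) a Ha ltac:(lra)).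
      pose proof (Rpower_pos y a).
      rewrite Rminus_0_r, Rabs_pos_eq; lra.
    + rewrite Rminus_0_r, Rabs_R0. apply cond_pos.
Qed.

Lemma ex_RInt_integrand n d u b : 1 < n -> 0 <= u -> 0 <= b < 1 ->
  ex_RInt (integrand n d u) 0 b.
Proof.
  intros Hn Hu Hb.
  set (D := INR d / 2).
  apply (ex_RInt_ext (fun s => pos_power (n - 1) s
           * / (sqrt (1 - s) * exp ((2 * n - D) * ln (1 + u * s))))).
  { rewrite Rmin_left, Rmax_right by lra. intros s Hs.
    unfold integrand, pos_power. destruct (Rlt_dec 0 s); [reflexivity | lra]. }
  apply (@ex_RInt_continuous R_CompleteNormedModule).
  rewrite Rmin_left, Rmax_right by lra. intros s Hs.
  apply (@continuous_mult _ R_AbsRing).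
  - apply pos_power_continuous; lra.
  - apply continuous_Rinv_comp.
    + apply (@ex_derive_continuous R_AbsRing R_NormedModule).
      auto_derive. repeat split; nra.
    + apply Rgt_not_eq, Rmult_lt_0_compat; [apply sqrt_lt_R0; lra | apply exp_pos].
Qed.

Lemma Rpower_integrand_split s P A n D : 0 < s -> 0 < P -> 0 < A ->
  Rpower P n * (Rpower s (n - 1) / Rpower A (2 * n - D)) =
  Rpower (s * P / A ^ 2) (n - 1 - D) * Rpower (s * P / A) D * (P / A ^ 2).
Proof.
  intros Hs HP HA.
  replace (A ^ 2) with (A * A) by ring.
  rewrite <- (exp_ln (P / (A * A))) by (apply Rdiv_lt_0_compat; nra).
  unfold Rpower, Rdiv.
  rewrite !ln_mult, !ln_Rinv, !ln_mult by (try apply Rinv_0_lt_compat; nra).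
  rewrite <- exp_Ropp, <- !exp_plus. f_equal. ring.
Qed.

Lemma integrand_base_le u s : 0 <= u -> 0 <= s <= 1 / 4 ->
  s * (1 + 4 * u) / (1 + u * s) ^ 2 <= 16 / 15.
Proof.
  intros Hu Hs.
  apply Rle_div_l; [nra |].
  (* With t = u s: 16 (1 + t)^2 - 15 (s + 4 t) = 16 (t - 7/8)^2 + 15 (1/4 - s). *)
  pose proof (pow2_ge_0 (u * s - 7 / 8)). nra.
Qed.

Lemma integrand_half_dim_base_le u s : 0 <= u -> 0 <= s <= 1 ->
  s * (1 + 4 * u) / (1 + u * s) <= 4.
Proof. intros Hu Hs. apply Rle_div_l; nra. Qed.

Lemma inv_sqrt_one_minus_le s : s <= 3 / 4 -> / sqrt (1 - s) <= 2.
Proof.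
  intros Hs.
  assert (Hsq : 1 / 2 <= sqrt (1 - s)).
  { rewrite <- (sqrt_square (1 / 2)) by lra. apply sqrt_le_1_alt. lra. }
  rewrite <- (Rinv_inv 2). apply Rinv_le_contravar; lra.
Qed.

Lemma scaled_integrand_le n d u s : 0 <= u -> 0 < s <= 1 / 4 -> INR d / 2 + 1 <= n ->
  Rpower (1 + 4 * u) n * integrand n d u s <=
  2 * Rpower 4 (INR d / 2) * Rpower (16 / 15) (n - 1 - INR d / 2)
    * ((1 + 4 * u) / (1 + u * s) ^ 2).
Proof.
  intros Hu Hs Hn. unfold integrand.
  set (D := INR d / 2) in *. set (P := 1 + 4 * u). set (A := 1 + u * s).
  assert (HD : 0 <= D) by (unfold D; pose proof (pos_INR d); lra).
  assert (HA : 1 <= A) by (unfold A; nra).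
  assert (Hsqrt : 0 < sqrt (1 - s)) by (apply sqrt_lt_R0; lra).
  replace (Rpower P n * _)
    with (Rpower P n * (Rpower s (n - 1) / Rpower A (2 * n - D)) * / sqrt (1 - s))
    by (field; split; [apply Rgt_not_eq, Rpower_pos | lra]).
  rewrite Rpower_integrand_split by (unfold P; lra).
  assert (Hbase : Rpower (s * P / A ^ 2) (n - 1 - D) <= Rpower (16 / 15) (n - 1 - D)).
  { apply Rle_Rpower_l; [lra | split; [apply Rdiv_lt_0_compat; unfold P; nra |]].
    apply integrand_base_le; lra. }
  assert (Hhalf : Rpower (s * P / A) D <= Rpower 4 D).
  { apply Rle_Rpower_l; [lra | split; [apply Rdiv_lt_0_compat; unfold P; nra |]].
    apply integrand_half_dim_base_le; lra. }
  pose proof (inv_sqrt_one_minus_le s ltac:(lra)) as Hinv.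
  assert (HW : 0 < P / A ^ 2) by (apply Rdiv_lt_0_compat; unfold P; nra).
  pose proof (Rpower_pos (s * P / A ^ 2) (n - 1 - D)).
  pose proof (Rpower_pos (s * P / A) D).
  pose proof (Rinv_0_lt_compat _ Hsqrt).
  apply Rle_trans with (Rpower (16 / 15) (n - 1 - D) * Rpower 4 D * (P / A ^ 2) * 2).
  - apply Rmult_le_compat; [| lra | | exact Hinv].
    + apply Rmult_le_pos; [apply Rmult_le_pos |]; lra.
    + apply Rmult_le_compat_r; [lra |]. apply Rmult_le_compat; lra.
  - lra.
Qed.

Lemma is_RInt_inv_sq_lin c u b : 0 <= u -> 0 <= b ->
  is_RInt (fun s => c / (1 + u * s) ^ 2) 0 b (c * b / (1 + u * b)).
Proof.
  intros Hu Hb.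
  replace (c * b / (1 + u * b)) with (minus (c * b / (1 + u * b)) (c * 0 / (1 + u * 0)))
    by (unfold minus, plus, opp; simpl; field; nra).
  apply (@is_RInt_derive R_CompleteNormedModule (fun s => c * s / (1 + u * s)));
    rewrite Rmin_left, Rmax_right by lra; intros s Hs.
  - auto_derive; [nra | field; nra].
  - apply (@ex_derive_continuous R_AbsRing R_NormedModule). auto_derive. nra.
Qed.

Lemma scal_R (a b : R) : scal a b = a * b.
Proof. reflexivity. Qed.

Lemma Bscr_le n d u : 0 <= u -> 1 < n -> INR d / 2 + 1 <= n ->
  Bscr n d u <= 8 * Rpower 4 (INR d / 2) * Rpower (16 / 15) (n - 1 - INR d / 2).
Proof.
  intros Hu Hn1 Hn.
  set (K := 2 * Rpower 4 (INR d / 2) * Rpower (16 / 15) (n - 1 - INR d / 2)).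
  assert (HK : 0 <= K)
    by (unfold K; pose proof (Rpower_pos 4 (INR d / 2));
        pose proof (Rpower_pos (16 / 15) (n - 1 - INR d / 2)); nra).
  pose proof (ex_RInt_integrand n d u (1 / 4) Hn1 Hu ltac:(lra)) as Hint.
  pose proof (is_RInt_inv_sq_lin (K * (1 + 4 * u)) u (1 / 4) Hu ltac:(lra)) as Hmaj.
  unfold Bscr. rewrite <- (RInt_scal _ _ _ _ Hint).
  apply Rle_trans with (K * (1 + 4 * u) * (1 / 4) / (1 + u * (1 / 4))).
  - rewrite <- (is_RInt_unique _ _ _ _ Hmaj).
    apply RInt_le; [lra | exact (ex_RInt_scal _ _ _ _ Hint) | exact (ex_intro _ _ Hmaj) |].
    intros s Hs. rewrite scal_R.
    replace (K * (1 + 4 * u) / (1 + u * s) ^ 2) with (K * ((1 + 4 * u) / (1 + u * s) ^ 2))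
      by (unfold Rdiv; ring).
    apply scaled_integrand_le; lra.
  - replace (K * (1 + 4 * u) * (1 / 4) / (1 + u * (1 / 4))) with (K * ((1 + 4 * u) / (4 + u)))
      by (field; lra).
    apply Rle_trans with (K * 4).
    + apply Rmult_le_compat_l; [exact HK |]. apply Rle_div_l; lra.
    + unfold K. lra.
Qed.

Theorem lemma4p3 (d : nat) (hd : (1 <= d)%nat) :
  exists C N : R, forall n : R, N <= n -> INR d / 2 < n ->
    Rbar_le (Bnd n d) (Finite (C * Rpower n (- (1 / 2)) * Rpower (9 / 8) n)).
Proof.
  set (D := INR d / 2).
  assert (HD : 0 <= D) by (unfold D; pose proof (pos_INR d); lra).
  destruct (Rpower_le_sqrt_decay (16 / 15) (9 / 8)) as [C HC]; [lra |].
  exists (8 * Rpower 4 D * C), (D + 2). intros n Hn _.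
  apply Lub_Rbar_correct. intros y [u [Hu ->]]. simpl.
  pose proof (Rpower_pos 4 D).
  apply Rle_trans with (8 * Rpower 4 D * Rpower (16 / 15) n).
  - apply Rle_trans with (8 * Rpower 4 D * Rpower (16 / 15) (n - 1 - D)).
    + apply Bscr_le; unfold D in *; lra.
    + apply Rmult_le_compat_l; [lra |]. apply Rle_Rpower; lra.
  - replace (8 * Rpower 4 D * C * Rpower n (- (1 / 2)) * Rpower (9 / 8) n)
      with (8 * Rpower 4 D * (C * Rpower n (- (1 / 2)) * Rpower (9 / 8) n)) by ring.
    apply Rmult_le_compat_l; [lra |]. apply HC. lra.
Qed.
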